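(* Let $G$ be a finite group such that (a) the Gruenberg--Kegel graph of $G$ is connected, and (b) for every Sylow subgroup $P$ of $G$, the centre $Z(P)$ is non-cyclic. Then the induced subgraph of $(\mathrm{Com}-\mathrm{Pow})(G)$ on $G\setminus\{1\}$ either has an isolated vertex or is connected.
   Context: $(\mathrm{Com}-\mathrm{Pow})(G)$ is the graph on vertex set $G$ in which distinct $x,y$ are adjacent iff $xy=yx$ and neither of $x,y$ is a power of the other. The Gruenberg--Kegel graph of $G$ has vertex set the primes dividing $|G|$, distinct primes $p,q$ being adjacent iff $G$ has an element of order $pq$. *)

From mathcomp Require Import all_boot all_fingroup all_solvable.
Set Implicit Arguments. Unset Strict Implicit. Unset Printing Implicit Defensive.
Local Open Scope group_scope.

Definition connected_on (T : eqType) (V : pred T) (e : rel T) : Prop :=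
  forall x y, V x -> V y ->
    exists s : seq T, [/\ path e x s, last x s = y & all V s].

Definition GK_adj (gT : finGroupType) (G : {set gT}) : rel nat :=
  fun p q => (p != q) && [exists x in G, #[x] == (p * q)%N].

Definition GK_connected (gT : finGroupType) (G : {set gT}) : Prop :=
  connected_on (fun p => p \in primes #|G|) (GK_adj G).

Definition ComPow_adj (gT : finGroupType) : rel gT :=
  fun x y => [&& x != y, x * y == y * x, x \notin <[y]> & y \notin <[x]>].

From mathcomp Require Import all_boot all_fingroup all_solvable.
Set Implicit Arguments. Unset Strict Implicit. Unset Printing Implicit Defensive.
Local Open Scope group_scope.

(* Let Γ be the commuting non-power graph on G^#.  For a Sylow p-subgroup P,
   Ω_1(Z(P)) is not cyclic, hence not covered by two cyclic subgroups <x>, <y>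
   of P; a central element of order p outside both is adjacent to x and to y,
   so P^# lies in a single component of Γ.  An element g of order pq gives
   adjacent elements g^q, g^p of orders p and q, so following the connected
   Gruenberg--Kegel graph, the component of an element a of prime order contains
   P^# for some Sylow subgroup P of every prime.  The g in G such that a^g lies
   in that component form a subgroup containing a Sylow subgroup for every
   prime, hence all of G: the component is closed under conjugation and so
   contains every nontrivial element of prime-power order.  Finally, if x has a
   neighbour y, some primary component y_r of y is not in <x>, and x is adjacent
   to y_r unless x is itself an r-element. *)

Definition induced_rel (T : Type) (V : pred T) (e : rel T) : rel T :=
  fun x y => [&& V x, V y & e x y].

Lemma induced_rel_sym (T : Type) (V : pred T) (e : rel T) :
  symmetric e -> symmetric (induced_rel V e).
Proof. by move=> e_sym x y; rewrite /induced_rel e_sym andbCA. Qed.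

Lemma connected_on_connect (T : finType) (V : pred T) (e : rel T) :
  (forall x y, V x -> V y -> connect (induced_rel V e) x y) -> connected_on V e.
Proof.
move=> conn x y Vx Vy; have /connectP[s es ->] := conn x y Vx Vy.
exists s; split=> //; first by apply: sub_path es => u v /and3P[].
by elim: s x {Vx} es => //= z s IHs x /andP[/and3P[_ -> _] /IHs].
Qed.

Lemma homo_connect (T : finType) (e : rel T) (f : T -> T) :
  {homo f : x y / e x y} -> {homo f : x y / connect e x y}.
Proof.
move=> f_e x _ /connectP[s es ->]; apply/connectP.
by exists (map f s); [exact: homo_path es | rewrite last_map].
Qed.

Section Groups.
Variable gT : finGroupType.
Implicit Types (x y : gT) (G H A B P : {group gT}).

Lemma exists_notin_subgroups2 H A B :
  ~~ (H \subset A) -> ~~ (H \subset B) ->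
  exists2 z, z \in H & (z \notin A) && (z \notin B).
Proof.
move=> /subsetPn[a Ha aA] /subsetPn[b Hb bB].
have [aB | aB] := boolP (a \in B); last by exists a; rewrite ?aA ?aB.
have [bA | bA] := boolP (b \in A); last by exists b; rewrite ?bA ?bB.
exists (a * b); first exact: groupM.
by rewrite (groupMr _ bA) aA (groupMl _ aB) bB.
Qed.

Lemma Ohm1_notin_cycles A x y : abelian A -> ~~ cyclic A ->
  exists2 z, z \in 'Ohm_1(A) & (z \notin <[x]>) && (z \notin <[y]>).
Proof.
move=> cAA A_ncyc; apply: exists_notin_subgroups2;
  apply: contra A_ncyc => sOx; rewrite abelian_rank1_cyclic // -rank_Ohm1;
  by rewrite (leq_trans (rankS sOx)) // rank_cycle leq_b1.
Qed.

Lemma p_elt_mem_primes G (p : nat) x : x \in G -> x != 1 -> p.-elt x -> p \in primes #|G|.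
Proof.
move=> Gx nx px; have [|pr_p p_x _] := pgroup_pdiv px; first by rewrite cycle_eq1.
by rewrite mem_primes pr_p cardG_gt0 (dvdn_trans p_x (order_dvdG Gx)).
Qed.

Lemma Sylows_subG G H :
  (forall p, p \in \pi(G) -> exists2 P : {group gT}, p.-Sylow(G) P & P \subset H) ->
  G \subset H.
Proof.
move=> sylH; pose T := [set P : {group gT} | P \subset G :&: H].
rewrite -(@Sylow_transversal_gen _ T G) => [|P | p /sylH[P sylP sPH]].
- by rewrite gen_subG; apply/bigcupsP => P; rewrite inE subsetI => /andP[].
- by rewrite inE subsetI => /andP[].
by exists P; rewrite // inE subsetI sPH (pHall_sub sylP).
Qed.

End Groups.

Section ComPowAdjacency.
Variable gT : finGroupType.
Implicit Types x y z g : gT.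

Lemma ComPow_adjE x y :
  ComPow_adj x y = [&& x * y == y * x, x \notin <[y]> & y \notin <[x]>].
Proof.
by rewrite /ComPow_adj; case: (eqVneq x y) => [-> | //]; rewrite cycle_id !andbF.
Qed.

Lemma ComPow_adjC x y : ComPow_adj x y = ComPow_adj y x.
Proof. by rewrite !ComPow_adjE eq_sym (andbC (x \notin _)). Qed.

Lemma ComPow_adjJ x y g : ComPow_adj (x ^ g) (y ^ g) = ComPow_adj x y.
Proof.
by rewrite !ComPow_adjE -!conjMg (inj_eq (conjg_inj g)) !cycleJ !memJ_conjg.
Qed.

Lemma ComPow_adj_neq1 x y : ComPow_adj x y -> x != 1.
Proof.
by rewrite ComPow_adjE => /and3P[_ x_y _]; apply: contraNneq x_y => ->.
Qed.

Lemma ComPow_adj_coprime x y :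
  commute x y -> coprime #[x] #[y] -> x != 1 -> y != 1 -> ComPow_adj x y.
Proof.
have notin (u v : gT) : coprime #[u] #[v] -> u != 1 -> u \notin <[v]>.
  move=> co nu; apply: contra nu => uv.
  have : u \in <[u]> :&: <[v]> by rewrite inE cycle_id.
  by rewrite (coprime_TIg co) inE.
move=> cxy co nx ny.
by rewrite ComPow_adjE cxy eqxx !notin // coprime_sym.
Qed.

Lemma ComPow_adj_prime_order x z :
  commute x z -> prime #[z] -> x != 1 -> z \notin <[x]> -> ComPow_adj x z.
Proof.
move=> cxz pr_z nx zx; rewrite ComPow_adjE cxz eqxx zx andbT.
have [|TI] := prime_subgroupVti <[x]> pr_z; first by rewrite cycle_subG (negPf zx).
apply: contra nx => xz; have : x \in <[x]> :&: <[z]> by rewrite inE cycle_id.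
by rewrite TI inE.
Qed.

Lemma ComPow_adj_constt x y :
  ComPow_adj x y -> exists r : nat, r.-elt x || ComPow_adj x y.`_r.
Proof.
rewrite ComPow_adjE => /and3P[/eqP cxy _ yx].
have [r yr_x] : exists r : 'I_#[y].+1, y.`_r \notin <[x]>.
  apply/existsP; apply: contraNT yx; rewrite negb_exists => /forallP yr_x.
  rewrite -(prod_constt y) big_mkord; apply: group_prod => r _.
  by rewrite -[_ \in _]negbK yr_x.
exists r; have [x_yr | x_yr] := boolP (x \in <[y.`_r]>).
  by rewrite (mem_p_elt (p_elt_constt r y) x_yr).
apply/orP; right; rewrite ComPow_adjE x_yr yr_x !andbT.
by have /cycleP[i ->] := cycle_constt r y; apply/eqP; exact: commuteX.
Qed.

End ComPowAdjacency.

Definition ComPow_graph (gT : finGroupType) (G : {set gT}) : rel gT :=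
  induced_rel (fun x => x \in G^#) (@ComPow_adj gT).

Section ComPowGraph.
Variable gT : finGroupType.
Implicit Types (x y z g : gT) (G P : {group gT}).

Lemma ComPow_graph_connect_sym G : connect_sym (ComPow_graph G).
Proof. by apply/sym_connect_sym/induced_rel_sym => x y; apply: ComPow_adjC. Qed.

Lemma ComPow_graph_adj G x y :
  x \in G -> y \in G -> ComPow_adj x y -> ComPow_graph G x y.
Proof.
move=> Gx Gy xy; have yx : ComPow_adj y x by rewrite ComPow_adjC.
rewrite /ComPow_graph /induced_rel !in_setD1 Gx Gy xy.
by rewrite (ComPow_adj_neq1 xy) (ComPow_adj_neq1 yx).
Qed.

Lemma connect_ComPow_graphJ G x y g : g \in G ->
  connect (ComPow_graph G) x y -> connect (ComPow_graph G) (x ^ g) (y ^ g).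
Proof.
move=> Gg; apply: (@homo_connect _ _ (conjg^~ g)) => u v.
by rewrite /ComPow_graph /induced_rel !in_setD1 !conjg_eq1 !groupJr // ComPow_adjJ.
Qed.

Lemma connect_ComPow_graph_pgroup (p : nat) G P x y :
  P \subset G -> p.-group P -> ~~ cyclic 'Z(P) -> x \in P^# -> y \in P^# ->
  connect (ComPow_graph G) x y.
Proof.
move=> sPG pP Z_ncyc /setD1P[nx Px] /setD1P[ny Py].
have cZZ := center_abelian P.
have [z Oz /andP[zx zy]] := Ohm1_notin_cycles x y cZZ Z_ncyc.
have /setIP[Pz /centP cPz] : z \in 'Z(P) := subsetP (Ohm_sub 1 _) z Oz.
have nz : z != 1 by apply: contraNneq zx => ->.
have pr_z : prime #[z].
  have [|pr_p _ _] := pgroup_pdiv pP; first by apply/trivgPn; exists x.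
  by rewrite (abelem_order_p (Ohm1_abelem (pgroupS (center_sub P) pP) cZZ) Oz nz).
have edge u : u \in P -> u != 1 -> z \notin <[u]> -> ComPow_graph G u z.
  move=> Pu nu zu; apply: ComPow_graph_adj; rewrite ?(subsetP sPG) //.
  by apply: ComPow_adj_prime_order => //; apply/commute_sym/cPz.
apply: connect_trans (connect1 (edge x Px nx zx)) _.
by rewrite ComPow_graph_connect_sym connect1 ?edge.
Qed.

End ComPowGraph.

Section Components.
Variables (gT : finGroupType) (G : {group gT}) (p0 : nat) (a : gT).
Hypothesis Z_Sylow_ncyclic : forall p, p \in primes #|G| ->
  forall P : {group gT}, P \in 'Syl_p(G) -> ~~ cyclic 'Z(P).

Local Notation C := (connect (ComPow_graph G) a).

Definition Sylow_in_component (p : nat) :=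
  exists2 P : {group gT}, p.-Sylow(G) P & forall x, x \in P^# -> C x.

Lemma Sylow_in_component_of_elt (p : nat) x :
  x \in G^# -> p.-elt x -> C x -> Sylow_in_component p.
Proof.
move=> /setD1P[nx Gx] px Cx; have p_G := p_elt_mem_primes Gx nx px.
have sxG : <[x]> \subset G by rewrite cycle_subG.
have [P sylP sxP] := Sylow_superset sxG px.
exists P => // y Py; apply: connect_trans Cx _.
apply: connect_ComPow_graph_pgroup (pHall_sub sylP) (pHall_pgroup sylP) _ _ Py.
  by apply: (Z_Sylow_ncyclic p_G); rewrite inE.
by rewrite !inE nx (subsetP sxP) ?cycle_id.
Qed.

Lemma Sylow_in_component_GK p q : prime p -> prime q -> GK_adj G p q ->
  Sylow_in_component p -> Sylow_in_component q.
Proof.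
move=> pr_p pr_q /andP[neq_pq /exists_inP[g Gg /eqP og]] [P sylP CP].
pose u := g ^+ q; pose t := g ^+ p.
have ou : #[u] = p by rewrite orderXdiv og ?dvdn_mull // mulnK // prime_gt0.
have ot : #[t] = q by rewrite orderXdiv og ?dvdn_mulr // mulKn // prime_gt0.
have [h Gh uhP] : exists2 h, h \in G & u ^ h \in P.
  have suG : <[u]> \subset G by rewrite cycle_subG groupX.
  have pu : p.-elt u by rewrite /p_elt ou pnat_id.
  have [h Gh suhP] := Sylow_Jsub sylP suG pu.
  by exists h; rewrite // (subsetP suhP) // memJ_conjg cycle_id.
have ut : ComPow_graph G (u ^ h) (t ^ h).
  apply: ComPow_graph_adj; rewrite ?groupJ ?groupX // ComPow_adjJ.
  apply: ComPow_adj_coprime; first exact: commuteX2.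
  - by rewrite ou ot prime_coprime // dvdn_prime2.
  - by rewrite -order_gt1 ou prime_gt1.
  by rewrite -order_gt1 ot prime_gt1.
have /and3P[/setD1P[nuh _] Gth _] := ut.
have Cuh : C (u ^ h) by apply: CP; rewrite !inE nuh uhP.
apply: (Sylow_in_component_of_elt Gth); first by rewrite p_eltJ /p_elt ot pnat_id.
exact: connect_trans Cuh (connect1 ut).
Qed.

Hypothesis GK_conn : GK_connected G.

Lemma Sylow_in_component_GK_connected p :
  p \in primes #|G| -> Sylow_in_component p ->
  forall q, q \in primes #|G| -> Sylow_in_component q.
Proof.
have pr_G r : r \in primes #|G| -> prime r by rewrite mem_primes => /andP[].
move=> p_G Cp q /(GK_conn p_G)[s [GK_s <- s_G]].
elim: s p p_G Cp GK_s s_G => //= r s IHs p p_G Cp /andP[GK_pr GK_s] /andP[r_G s_G].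
have Cr := Sylow_in_component_GK (pr_G p p_G) (pr_G r r_G) GK_pr Cp.
exact: IHs r_G Cr GK_s s_G.
Qed.

Hypotheses (a_nontriv : a \in G^#) (a_p0_elt : p0.-elt a).

Lemma Sylows_in_component p : p \in primes #|G| -> Sylow_in_component p.
Proof.
have /setD1P[na Ga] := a_nontriv.
apply: Sylow_in_component_GK_connected (p_elt_mem_primes Ga na a_p0_elt) _ p.
exact: Sylow_in_component_of_elt a_nontriv a_p0_elt (connect0 _ a).
Qed.

Lemma component_conjg_closed x g : g \in G -> C x -> C (x ^ g).
Proof.
move=> Gg Cx; apply: connect_trans (connect_ComPow_graphJ Gg Cx).
pose N := [set h in G | C (a ^ h)].
have gN : group_set N.
  apply/group_setP; split=> [|h k]; first by rewrite inE group1 conjg1 connect0.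
  rewrite !inE => /andP[Gh Cah] /andP[Gk Cak]; rewrite groupM //= conjgM.
  exact: connect_trans Cak (connect_ComPow_graphJ Gk Cah).
have /subsetP sGN : G \subset Group gN.
  apply: Sylows_subG => p p_G; have [P sylP CP] := Sylows_in_component p_G.
  exists P => //; apply/subsetP => h Ph; have Gh := subsetP (pHall_sub sylP) h Ph.
  rewrite inE Gh; have [-> | nh] := eqVneq h 1; first by rewrite conjg1 connect0.
  have Ch : C h by apply: CP; rewrite !inE nh.
  have := connect_ComPow_graphJ Gh Ch; rewrite [h ^ h]conjgE mulKg => Cah_h.
  by apply: connect_trans Ch _; rewrite ComPow_graph_connect_sym.
by have := sGN g Gg; rewrite inE => /andP[].
Qed.

Lemma component_p_elt (p : nat) w : w \in G^# -> p.-elt w -> C w.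
Proof.
move=> /setD1P[nw Gw] pw.
have [P sylP CP] := Sylows_in_component (p_elt_mem_primes Gw nw pw).
have swG : <[w]> \subset G by rewrite cycle_subG.
have [h Gh swP] := Sylow_Jsub sylP swG pw.
rewrite -(conjgK h w); apply: component_conjg_closed; rewrite ?groupV //.
by apply: CP; rewrite !inE conjg_eq1 nw (subsetP swP) // memJ_conjg cycle_id.
Qed.

Hypothesis no_isolated :
  forall x, x \in G^# -> exists2 y, y \in G^# & ComPow_adj x y.

Lemma component_full x : x \in G^# -> C x.
Proof.
move=> Gx; have [y /setD1P[_ Gy] xy] := no_isolated Gx.
have [r /orP[rx | x_yr]] := ComPow_adj_constt xy; first exact: component_p_elt rx.
have Gyr : y.`_r \in G by rewrite (subsetP _ _ (cycle_constt r y)) ?cycle_subG.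
have /setD1P[_ Gx'] := Gx.
have yr_x : ComPow_graph G y.`_r x by rewrite ComPow_graph_adj // ComPow_adjC.
have /and3P[Gyr' _ _] := yr_x.
exact: connect_trans (component_p_elt Gyr' (p_elt_constt r y)) (connect1 yr_x).
Qed.

Lemma ComPow_graph_connected x y :
  x \in G^# -> y \in G^# -> connect (ComPow_graph G) x y.
Proof.
move=> Gx Gy; apply: connect_trans (component_full Gy).
by rewrite ComPow_graph_connect_sym component_full.
Qed.

End Components.

Theorem mainTheorem20 (gT : finGroupType) (G : {group gT}) :
  GK_connected G ->
  (forall p, p \in primes #|G| ->
     forall P : {group gT}, P \in 'Syl_p(G) -> ~~ cyclic 'Z(P)) ->
  (exists2 x, x \in G^# & forall y, y \in G^# -> ~~ ComPow_adj x y)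
  \/ connected_on (fun x => x \in G^#) (@ComPow_adj gT).
Proof.
move=> GK_conn Z_ncyc.
case: (boolP [exists x in G^#, [forall y in G^#, ~~ ComPow_adj x y]]).
  by case/exists_inP=> x Gx /forall_inP isolated; left; exists x.
rewrite negb_exists_in => /forall_inP no_isolated; right.
have neighbour x : x \in G^# -> exists2 y, y \in G^# & ComPow_adj x y.
  move/no_isolated; rewrite negb_forall_in => /exists_inP[y Gy /negbNE xy].
  by exists y.
apply: connected_on_connect => x y Gx Gy.
have /setD1P[nx Gx'] := Gx.
have ntG : 1 < #|G| by rewrite cardG_gt1; apply/trivgPn; exists x.
have pr_p := pdiv_prime ntG.
have [a Ga oa] := Cauchy pr_p (pdiv_dvd #|G|).
have a_nontriv : a \in G^# by rewrite !inE Ga -order_gt1 oa prime_gt1.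
have a_p_elt : (pdiv #|G|).-elt a by rewrite /p_elt oa pnat_id.
exact: ComPow_graph_connected Z_ncyc GK_conn a_nontriv a_p_elt neighbour _ _ Gx Gy.
Qed.
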